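(* Let $\Delta_0\subset\mathbb{R}^d$ be the vertex set of a regular simplex of edge length $1$ with centroid at the origin. There exists $\varepsilon_0>0$ such that for every $\tau\in\mathbb{R}^d$ and $R\in O(d)$ with $\|\tau\|_2+\|R-I_d\|_2\le\varepsilon_0$, writing $\Delta'=\{Rx+\tau: x\in\Delta_0\}$, \[ \mathrm{dist}_H(\Delta_0,\Delta')\;\le\; d^2(d+1)\,\bigl(\mathrm{diam}(\Delta_0\cup\Delta')-1\bigr). \]
   Context: A regular simplex of edge length $1$ is given by its vertex set: $d+1$ points at pairwise distance exactly $1$. $\|\cdot\|_2$ on matrices is the operator norm. $\mathrm{diam}(A)=\sup_{x,y\in A}\|x-y\|_2$. For nonempty compact $A,B\subset\mathbb{R}^d$, $\mathrm{dist}_H(A,B)=\max\{\sup_{a\in A}\inf_{b\in B}\|a-b\|_2,\ \sup_{b\in B}\inf_{a\in A}\|a-b\|_2\}$. *)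

From HB Require Import structures.
From mathcomp Require Import all_boot all_order all_algebra.
From mathcomp Require Import boolp classical_sets reals.
Set Implicit Arguments. Unset Strict Implicit. Unset Printing Implicit Defensive.
Import Order.TTheory GRing.Theory Num.Theory.
Local Open Scope ring_scope.
Local Open Scope classical_set_scope.

Section Defs.
Variable R : realType.

Definition enorm (d : nat) (x : 'cV[R]_d) : R :=
  Num.sqrt (\sum_(i < d) x i ord0 ^+ 2).

Definition opnorm (d : nat) (A : 'M[R]_d) : R :=
  sup [set enorm (A *m x) | x in [set x : 'cV[R]_d | enorm x <= 1]].

Definition orthogonal_mx (d : nat) (Q : 'M[R]_d) : Prop := Q^T *m Q = 1%:M.

Definition diam (d : nat) (A : set 'cV[R]_d) : R :=
  sup [set enorm (x - y) | x in A & y in A].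

Definition hexcess (d : nat) (A B : set 'cV[R]_d) : R :=
  sup [set inf [set enorm (a - b) | b in B] | a in A].

Definition distH (d : nat) (A B : set 'cV[R]_d) : R :=
  Num.max (hexcess A B) (hexcess B A).

Definition regular_unit_simplex (d : nat) (v : 'I_d.+1 -> 'cV[R]_d) : Prop :=
  forall i j, i != j -> enorm (v i - v j) = 1.

Definition centroid_zero (d : nat) (v : 'I_d.+1 -> 'cV[R]_d) : Prop :=
  \sum_(i < d.+1) v i = 0.

End Defs.

(* Let w_j = (Q - 1) v_j + tau be the displacement of vertex j and m = |w_i| the
   largest one; matching every vertex with its image gives dist_H <= m, and
   m <= 2 (|tau| + ||Q - 1||) is small.  The edges v_i - v_k (k <> i) have Gram matrix (1 + J)/2, so
   |w_i|^2 <= 2 sum_k <v_i - v_k, w_i>^2.  Expanding |v_i + w_i - v_k|^2 and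
   |v_k + w_k - v_i|^2, both at most D^2 with D the diameter of the union, and
   the rigidity identity |(v_i + w_i) - (v_k + w_k)| = 1 bounds each of these
   inner products by (D^2 - 1 + 3 m^2)/2.  Hence m^2 <= 2 d ((D^2 - 1 + 3 m^2)/2)^2,
   which for small m forces m <= 2 d^2 (D - 1). *)

From HB Require Import structures.
From mathcomp Require Import all_boot all_order all_algebra.
From mathcomp Require Import boolp classical_sets reals.
From mathcomp Require Import ring lra.
Import Order.TTheory GRing.Theory Num.Theory.
Local Open Scope ring_scope.
Local Open Scope classical_set_scope.

Set Implicit Arguments. Unset Strict Implicit.

Section InnerProduct.
Variables (R : realType) (d : nat).
Implicit Types x y z : 'cV[R]_d.

Definition vdot x y : R := \sum_i x i ord0 * y i ord0.

Lemma vdotE x y : vdot x y = (x^T *m y) ord0 ord0.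
Proof. by rewrite /vdot !mxE; apply: eq_bigr => i _; rewrite mxE. Qed.

Lemma vdotC x y : vdot x y = vdot y x.
Proof. by apply: eq_bigr => i _; rewrite mulrC. Qed.

Lemma vdotDl x y z : vdot (x + y) z = vdot x z + vdot y z.
Proof. by rewrite /vdot -big_split; apply: eq_bigr => i _; rewrite mxE mulrDl. Qed.

Lemma vdotNl x y : vdot (- x) y = - vdot x y.
Proof. by rewrite /vdot -sumrN; apply: eq_bigr => i _; rewrite mxE mulNr. Qed.

Lemma vdotDr x y z : vdot z (x + y) = vdot z x + vdot z y.
Proof. by rewrite vdotC vdotDl !(vdotC z). Qed.

Lemma vdotNr x y : vdot y (- x) = - vdot y x.
Proof. by rewrite vdotC vdotNl vdotC. Qed.

Lemma vdotBr x y z : vdot z (x - y) = vdot z x - vdot z y.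
Proof. by rewrite vdotDr vdotNr. Qed.

Lemma vdot0r x : vdot x 0 = 0.
Proof. by rewrite /vdot big1 // => i _; rewrite mxE mulr0. Qed.

Lemma vdot_ge0 x : 0 <= vdot x x.
Proof. by apply: sumr_ge0 => i _; rewrite -expr2 sqr_ge0. Qed.

Lemma vdot_sqrD x y : vdot (x + y) (x + y) = vdot x x + 2 * vdot x y + vdot y y.
Proof. by rewrite vdotDl !vdotDr (vdotC y x); ring. Qed.

Lemma vdot_sqrB x y : vdot (x - y) (x - y) = vdot x x - 2 * vdot x y + vdot y y.
Proof. by rewrite vdot_sqrD vdotNr vdotNl vdotNr opprK; ring. Qed.

Lemma vdot_sumr x n (y : 'I_n -> 'cV[R]_d) :
  vdot x (\sum_(j < n) y j) = \sum_(j < n) vdot x (y j).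
Proof. by rewrite vdotE mulmx_sumr summxE; apply: eq_bigr => j _; rewrite vdotE. Qed.

Lemma vdot_orthogonal (Q : 'M[R]_d) x y :
  orthogonal_mx Q -> vdot (Q *m x) (Q *m y) = vdot x y.
Proof. by move=> hQ; rewrite !vdotE trmx_mul -mulmxA (mulmxA Q^T) hQ mul1mx. Qed.

Lemma enorm_sqr x : enorm x ^+ 2 = vdot x x.
Proof.
rewrite /enorm sqr_sqrtr; last by apply: sumr_ge0 => i _; rewrite sqr_ge0.
by apply: eq_bigr => i _; rewrite expr2.
Qed.

Lemma enorm_ge0 x : 0 <= enorm x.
Proof. exact: sqrtr_ge0. Qed.

Lemma enormN x : enorm (- x) = enorm x.
Proof. by rewrite /enorm; congr Num.sqrt; apply: eq_bigr => i _; rewrite mxE sqrrN. Qed.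

Lemma enorm_le x a : 0 <= a -> vdot x x <= a ^+ 2 -> enorm x <= a.
Proof. by move=> a0; rewrite -enorm_sqr ler_pXn2r // nnegrE ?enorm_ge0. Qed.

Lemma vdot_le_sqr x a : enorm x <= a -> vdot x x <= a ^+ 2.
Proof.
move=> xa; rewrite -enorm_sqr ler_pXn2r // nnegrE ?enorm_ge0 //.
exact: le_trans (enorm_ge0 x) xa.
Qed.

Lemma enormD_sqr_le x y : enorm (x + y) ^+ 2 <= 2 * (enorm x ^+ 2 + enorm y ^+ 2).
Proof.
rewrite !enorm_sqr vdot_sqrD.
by have := vdot_ge0 (x - y); rewrite vdot_sqrB; lra.
Qed.

End InnerProduct.

Section FrameInequality.
Variables (R : realType) (d : nat).

Local Notation J := (const_mx 1 : 'M[R]_d).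

Lemma const_mx1_mulmx_id : J *m J = d%:R *: J.
Proof.
apply/matrixP => k l; rewrite !mxE.
under eq_bigr do rewrite !mxE mulr1.
by rewrite sumr_const card_ord mulr1.
Qed.

(* The matrix 1 + J has eigenvalues 1 and d + 1, whence this inverse. *)
Lemma const_mx1_addI_inv : (1%:M + J) *m (1%:M - d.+1%:R^-1 *: J) = 1%:M.
Proof.
rewrite mulmxDl mul1mx mulmxBr mulmx1 -scalemxAr const_mx1_mulmx_id scalerA.
have ed : 1 - d.+1%:R^-1 - d.+1%:R^-1 * d%:R = 0 :> R.
  by rewrite -natr1; field; rewrite natr1 pnatr_eq0.
by apply/matrixP => k l; rewrite !mxE !mulr1 -[RHS]addr0 -ed; ring.
Qed.

Lemma quad_form_le (b : 'cV[R]_d) (c : R) : 0 <= c ->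
  (b^T *m (1%:M - c *: J) *m b) ord0 ord0 <= vdot b b.
Proof.
move=> c0; pose ones : 'cV[R]_d := const_mx 1.
set s := (b^T *m ones) ord0 ord0.
have Je : J = ones *m ones^T.
  by apply/matrixP => k l; rewrite !mxE big_ord1 !mxE mulr1.
have bJb : (b^T *m J *m b) ord0 ord0 = s ^+ 2.
  rewrite Je mulmxA -(mulmxA _ _ b) -[ones^T *m b]trmxK trmx_mul trmxK.
  by rewrite [LHS]mxE big_ord1 [X in _ * X]mxE expr2.
rewrite mulmxBr mulmx1 -scalemxAr mulmxBl -scalemxAl [leLHS]mxE -vdotE.
by rewrite 2!mxE bJb gerBl mulr_ge0 ?sqr_ge0.
Qed.

(* Any d vectors with Gram matrix (1 + J)/2, such as the edges from one vertex
   of a regular unit simplex, form a frame with lower bound 1/2. *)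
Lemma vdot_le_frame (u : 'I_d -> 'cV[R]_d) :
  (forall k l, vdot (u k) (u l) = (1 + (k == l)%:R) / 2) ->
  forall x, vdot x x <= 2 * \sum_k vdot (u k) x ^+ 2.
Proof.
move=> hu x.
pose U : 'M[R]_d := \matrix_(k, l) u k l ord0.
pose H : 'M[R]_d := 2 *: (1%:M - d.+1%:R^-1 *: J).
have UUt : U *m U^T = 2^-1 *: (1%:M + J).
  apply/matrixP => k l; rewrite !mxE.
  transitivity (vdot (u k) (u l)); first by apply: eq_bigr => j _; rewrite !mxE.
  by rewrite hu mulrC addrC.
have UtH_U : U^T *m H *m U = 1%:M.
  apply: mulmx1C; rewrite mulmxA UUt /H -scalemxAr -scalemxAl scalerA.
  by rewrite divff ?pnatr_eq0 // scale1r const_mx1_addI_inv.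
pose b := U *m x.
have -> : \sum_k vdot (u k) x ^+ 2 = vdot b b.
  apply: eq_bigr => k _; rewrite expr2 /b !mxE.
  by congr (_ * _); apply: eq_bigr => l _; rewrite !mxE.
have -> : vdot x x = 2 * (b^T *m (1%:M - d.+1%:R^-1 *: J) *m b) ord0 ord0.
  rewrite vdotE.
  have -> : x^T *m x = b^T *m H *m b.
    by rewrite trmx_mul !mulmxA -(mulmxA x^T) -(mulmxA x^T) UtH_U mulmx1.
  by rewrite /H -scalemxAr -scalemxAl mxE.
by rewrite ler_pM2l // quad_form_le // invr_ge0.
Qed.

End FrameInequality.

Section SimplexDisplacement.
Variables (R : realType) (d : nat) (v w : 'I_d.+1 -> 'cV[R]_d).
Hypothesis hv : forall j k, j != k -> vdot (v j - v k) (v j - v k) = 1.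

Lemma simplex_edge_gram i k l :
  vdot (v i - v (lift i k)) (v i - v (lift i l)) = (1 + (k == l)%:R) / 2.
Proof.
have [<-|nkl] := eqVneq k l; first by rewrite hv ?neq_lift //=; field.
set a := v i - v (lift i k); set b := v i - v (lift i l).
have hkl : vdot (a - b) (a - b) = 1.
  have -> : a - b = v (lift i l) - v (lift i k) by rewrite opprB addrC addrA subrK.
  by apply: hv; apply: contra nkl => /eqP/lift_inj ->.
rewrite vdot_sqrB !hv ?neq_lift //= in hkl.
by rewrite /=; lra.
Qed.

Variables (i : 'I_d.+1) (D : R).
Hypothesis hvw : forall j k, j != k ->
  vdot (v j + w j - (v k + w k)) (v j + w j - (v k + w k)) = 1.
Hypothesis hw : forall j, enorm (w j) <= enorm (w i).
Hypothesis hmixed : forall j k, j != k -> enorm (v j + w j - v k) <= D.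

Let m := enorm (w i).
Let eta := D ^+ 2 - 1.

Lemma edge_displacement_vdot_bound j : j != i ->
  `|vdot (v i - v j) (w i)| <= (eta + 3 * m ^+ 2) / 2.
Proof.
move=> nji; have nij : i != j by rewrite eq_sym.
have hwi : vdot (w i) (w i) = m ^+ 2 by rewrite enorm_sqr.
pose u := v i - v j; have hu : vdot u u = 1 := hv nij.
have e1 : v i + w i - v j = u + w i by rewrite addrAC.
have e2 : v j + w j - v i = w j - u by rewrite opprB addrA (addrC (w j)).
have e3 : v i + w i - (v j + w j) = u + (w i - w j) by rewrite opprD addrACA.
have h1 := vdot_le_sqr (hmixed nij); rewrite e1 vdot_sqrD hu hwi in h1.
have h2 := vdot_le_sqr (hmixed nji); rewrite e2 vdot_sqrB (vdotC _ u) hu in h2.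
have h3 := hvw nij; rewrite e3 vdot_sqrD vdotBr vdot_sqrB hu hwi in h3.
have h4 := vdot_ge0 (w i + w j); rewrite vdot_sqrD hwi in h4.
have h5 := vdot_le_sqr (hw j); rewrite -/m in h5; have m2 := sqr_ge0 m.
by rewrite -/u /eta ler_norml; apply/andP; split; lra.
Qed.

Lemma max_displacement_sqr_le : m ^+ 2 <= 2 * (d%:R * ((eta + 3 * m ^+ 2) / 2) ^+ 2).
Proof.
have := vdot_le_frame (simplex_edge_gram i) (w i); rewrite -enorm_sqr -/m => frame.
apply: le_trans frame _.
have hk k : vdot (v i - v (lift i k)) (w i) ^+ 2 <= ((eta + 3 * m ^+ 2) / 2) ^+ 2.
  have /edge_displacement_vdot_bound : lift i k != i by rewrite eq_sym neq_lift.
  by rewrite ler_norml => /andP[lo hi]; nra.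
rewrite ler_pM2l //; apply: le_trans (ler_sum _ (fun k _ => hk k)) _.
by rewrite sumr_const card_ord [in leRHS]mulr_natl.
Qed.

End SimplexDisplacement.

(* Either D - 1 >= 1/2 and the claim is trivial, or the quadratic bound forces
   m <= 2 n^2 (D - 1): otherwise the right-hand side would be at most
   2 (13/20)^2 m^2 / n^3 < m^2. *)
Lemma displacement_le_excess (R : realFieldType) (n K m D : R) :
  1 <= n -> 2 * n ^+ 2 <= K -> 0 <= m -> m * (60 * n ^+ 2) <= 1 -> 1 <= D ->
  m ^+ 2 <= 2 * (n * ((D ^+ 2 - 1 + 3 * m ^+ 2) / 2) ^+ 2) ->
  m <= K * (D - 1).
Proof.
move=> n1 nK m0 msmall D1 hm.
have n2 : 1 <= n ^+ 2 by nra.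
have m60 : m <= 1 / 60 by nra.
have [D32|D32] := lerP (3 / 2) D; first by nra.
rewrite leNgt; apply/negP => hlt.
set e := D - 1 in hlt.
have e0 : 0 <= e by rewrite /e; lra.
have me : 2 * n ^+ 2 * e < m by have := ler_wpM2r e0 nK; lra.
set eta := D ^+ 2 - 1 in hm.
have et : eta <= 5 / 2 * e by rewrite /eta /e; nra.
have et0 : 0 <= eta by rewrite /eta; nra.
set beta := (eta + 3 * m ^+ 2) / 2 in hm.
have b0 : 0 <= beta by rewrite /beta; nra.
have t1 : eta * n ^+ 2 <= 5 / 4 * m by nra.
have t2 : 3 * m ^+ 2 * n ^+ 2 <= m / 20 by nra.
have b1 : beta * n ^+ 2 <= 13 / 20 * m by rewrite /beta; nra.
have b2 : (beta * n ^+ 2) ^+ 2 <= (13 / 20 * m) ^+ 2.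
  by rewrite ler_sqr ?nnegrE //; nra.
have n3 : 1 <= n ^+ 3 by nra.
have h3 : m ^+ 2 * n ^+ 3 <= 2 * n ^+ 4 * beta ^+ 2.
  rewrite (_ : 2 * n ^+ 4 * beta ^+ 2 = 2 * (n * beta ^+ 2) * n ^+ 3); last by ring.
  by apply: ler_wpM2r; lra.
have mp : 0 < m by have := mulr_ge0 (mulr_ge0 (ler0n R 2) (le_trans ler01 n2)) e0; lra.
have h4 : m ^+ 2 <= m ^+ 2 * n ^+ 3 by rewrite ler_peMr ?sqr_ge0.
have h5 : 2 * n ^+ 4 * beta ^+ 2 = 2 * (beta * n ^+ 2) ^+ 2 by ring.
have h6 : 0 < m ^+ 2 by rewrite exprn_gt0.
lra.
Qed.

Section SetBounds.
Variables (R : realType) (d : nat).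

Lemma hexcess_le (A B : set 'cV[R]_d) m : A !=set0 ->
  (forall a, A a -> exists2 b, B b & enorm (a - b) <= m) -> hexcess A B <= m.
Proof.
move=> [a0 Aa0] h; apply: ge_sup; first by exists (inf [set enorm (a0 - b) | b in B]), a0.
move=> _ [a Aa <-]; have [b Bb ab] := h a Aa.
apply: le_trans ab; apply: ge_inf; last by exists b.
by exists 0 => _ [b' _ <-]; apply: enorm_ge0.
Qed.

Lemma enorm_le_diam (I : finType) (p : I -> 'cV[R]_d) (A : set 'cV[R]_d) x y :
  A `<=` range p -> A x -> A y -> enorm (x - y) <= diam A.
Proof.
move=> Ap Ax Ay; apply: sup_upper_bound; last by exists x => //; exists y.
split; first by exists (enorm (x - y)), x => //; exists y.
exists (\sum_k \sum_l enorm (p k - p l)) => _ [x' /Ap[k _ <-] [y' /Ap[l _ <-] <-]].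
rewrite (bigD1 k) //= (bigD1 l) //= -addrA lerDl addr_ge0 //.
  by apply: sumr_ge0 => l' _; apply: enorm_ge0.
by apply: sumr_ge0 => k' _; apply: sumr_ge0 => l' _; apply: enorm_ge0.
Qed.

Lemma enorm_le_opnorm (M : 'M[R]_d) (x : 'cV[R]_d) B :
  (forall y, enorm y <= 1 -> enorm (M *m y) <= B) -> enorm x <= 1 ->
  enorm (M *m x) <= opnorm M.
Proof.
move=> MB x1; apply: sup_upper_bound; last by exists x.
by split; [exists (enorm (M *m x)), x | exists B => _ [y y1 <-]; apply: MB].
Qed.

End SetBounds.

Section RegularSimplex.
Variables (R : realType) (d : nat) (v : 'I_d.+1 -> 'cV[R]_d).
Hypothesis hreg : regular_unit_simplex v.

Lemma regular_simplex_vdot j k : j != k -> vdot (v j - v k) (v j - v k) = 1.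
Proof. by move=> /hreg; rewrite -enorm_sqr => ->; rewrite expr1n. Qed.

(* Summing |v_i - v_j|^2 over j, the cross terms vanish since the centroid is 0. *)
Lemma regular_simplex_vdot_le1 : centroid_zero v -> forall i, vdot (v i) (v i) <= 1.
Proof.
move=> hcen i.
have le1 j : vdot (v i - v j) (v i - v j) <= 1.
  by have [<-|/regular_simplex_vdot ->] := eqVneq i j; rewrite ?subrr ?vdot0r ?ler01.
have sum_le : \sum_j vdot (v i - v j) (v i - v j) <= \sum_(j < d.+1) (1 : R).
  exact: ler_sum.
have sumE : \sum_j vdot (v i - v j) (v i - v j) =
    d.+1%:R * vdot (v i) (v i) + \sum_j vdot (v j) (v j).
  under eq_bigr do rewrite vdot_sqrB.
  rewrite big_split sumrB /= sumr_const card_ord -mulr_sumr -(vdot_sumr (v i) v).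
  by rewrite hcen vdot0r mulr0 subr0 mulr_natl.
rewrite sumE sumr_const card_ord -mulr_natl mulr1 in sum_le.
have : 0 <= \sum_j vdot (v j) (v j) by apply: sumr_ge0 => j _; apply: vdot_ge0.
have : 0 < d.+1%:R :> R by rewrite ltr0n.
nra.
Qed.

End RegularSimplex.

Lemma orthogonal_subI_le2 (R : realType) (d : nat) (Q : 'M[R]_d) (y : 'cV[R]_d) :
  orthogonal_mx Q -> enorm y <= 1 -> enorm ((Q - 1%:M) *m y) <= 2.
Proof.
move=> hQ y1; apply: enorm_le => //.
have yy := vdot_le_sqr y1; have := vdot_ge0 (Q *m y + y).
by rewrite mulmxBl mul1mx vdot_sqrB vdot_sqrD !vdot_orthogonal //; lra.
Qed.

Section RigidMotion.
Variables (R : realType) (d : nat) (v : 'I_d.+1 -> 'cV[R]_d).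
Variables (Q : 'M[R]_d) (tau : 'cV[R]_d).
Hypothesis hQ : orthogonal_mx Q.

Let w j := (Q - 1%:M) *m v j + tau.
Let image := [set Q *m x + tau | x in range v].

Lemma rigid_image_vertexE j : Q *m v j + tau = v j + w j.
Proof. by rewrite /w mulmxBl mul1mx addrA addrCA subrr addr0. Qed.

Lemma distH_rigid_image_le m :
  (forall j, enorm (w j) <= m) -> distH (range v) image <= m.
Proof.
move=> wm; rewrite /distH ge_max; apply/andP; split; apply: hexcess_le.
- by exists (v ord0), ord0.
- move=> _ [j _ <-]; exists (Q *m v j + tau); first by exists (v j) => //; exists j.
  by rewrite rigid_image_vertexE opprD addrA subrr add0r enormN.
- by exists (Q *m v ord0 + tau), (v ord0) => //; exists ord0.
- move=> _ [_ [j _ <-] <-]; exists (v j); first by exists j.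
  by rewrite rigid_image_vertexE addrAC subrr add0r.
Qed.

Lemma enorm_le_diam_rigid_union x y :
  (range v `|` image) x -> (range v `|` image) y ->
  enorm (x - y) <= diam (range v `|` image).
Proof.
apply: (@enorm_le_diam _ _ _ (fun bj : bool * 'I_d.+1 =>
  if bj.1 then Q *m v bj.2 + tau else v bj.2)).
by move=> _ [[j _ <-]|[_ [j _ <-] <-]]; [exists (false, j) | exists (true, j)].
Qed.

Lemma rigid_union_mixed_le_diam j k :
  enorm (v j + w j - v k) <= diam (range v `|` image).
Proof.
apply: enorm_le_diam_rigid_union; last by left; exists k.
by right; exists (v j); [exists j | exact: rigid_image_vertexE].
Qed.

Lemma diam_rigid_union_ge1 (j k : 'I_d.+1) : regular_unit_simplex v -> j != k ->
  1 <= diam (range v `|` image).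
Proof.
move=> hreg njk; rewrite -(hreg j k njk).
by apply: enorm_le_diam_rigid_union; left; [exists j | exists k].
Qed.

Lemma rigid_displacement_le j : vdot (v j) (v j) <= 1 ->
  enorm (w j) <= 2 * (enorm tau + opnorm (Q - 1%:M)).
Proof.
move=> vj1.
have a_le : enorm ((Q - 1%:M) *m v j) <= opnorm (Q - 1%:M).
  apply: (@enorm_le_opnorm _ _ _ _ 2) => [y|]; first exact: orthogonal_subI_le2.
  by apply: enorm_le; rewrite ?expr1n.
have := enormD_sqr_le ((Q - 1%:M) *m v j) tau.
have := enorm_ge0 ((Q - 1%:M) *m v j); have := enorm_ge0 tau; have := enorm_ge0 (w j).
by rewrite -/(w j); nra.
Qed.

Lemma rigid_image_edge : regular_unit_simplex v -> forall j k, j != k ->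
  vdot (v j + w j - (v k + w k)) (v j + w j - (v k + w k)) = 1.
Proof.
move=> hreg j k njk; rewrite -!rigid_image_vertexE opprD addrACA subrr addr0.
by rewrite -mulmxBr vdot_orthogonal // regular_simplex_vdot.
Qed.

End RigidMotion.

Unset Implicit Arguments.
Theorem mainTheorem12 (R : realType) (d : nat) (v : 'I_d.+1 -> 'cV[R]_d)
  (hreg : regular_unit_simplex v) (hcen : centroid_zero v) :
  exists eps0 : R, 0 < eps0 /\
    forall (tau : 'cV[R]_d) (Q : 'M[R]_d),
      orthogonal_mx Q ->
      enorm tau + opnorm (Q - 1%:M) <= eps0 ->
      distH (range v) [set Q *m x + tau | x in range v]
        <= (d ^ 2 * d.+1)%:R
           * (diam (range v `|` [set Q *m x + tau | x in range v]) - 1).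
Proof.
case: d v hreg hcen => [|d] v hreg hcen.
  exists 1; split=> // tau Q _ _; rewrite mul0n mul0r.
  by apply: distH_rigid_image_le => j; rewrite /enorm big_ord0 sqrtr0.
pose n : R := d.+1%:R; have n1 : 1 <= n by rewrite ler1n.
exists (120 * n ^+ 2)^-1; split=> [|tau Q hQ small]; first by rewrite invr_gt0; nra.
pose w j := (Q - 1%:M) *m v j + tau.
have [i _ i_max] := @arg_maxP _ _ _ ord0 xpredT (fun j => enorm (w j)) isT.
have wi_max j : enorm (w j) <= enorm (w i) by apply: i_max.
apply: le_trans (distH_rigid_image_le (m := enorm (w i)) wi_max) _.
apply: (displacement_le_excess n1 _ (enorm_ge0 _) _
  (diam_rigid_union_ge1 Q tau hreg (neq_lift ord0 ord0))).
- by rewrite natrM natrX -/n mulrC ler_wpM2l ?sqr_ge0 ?ler_nat.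
- have n0 : 0 < n by apply: lt_le_trans n1.
  rewrite -ler_pdivlMr ?mul1r ?mulr_gt0 ?exprn_gt0 //.
  apply: le_trans (rigid_displacement_le tau hQ (regular_simplex_vdot_le1 hreg hcen i)) _.
  rewrite (_ : _^-1 = 2 * (120 * n ^+ 2)^-1); first by rewrite ler_pM2l.
  by field; rewrite nat1r pnatr_eq0.
- exact (max_displacement_sqr_le (regular_simplex_vdot hreg)
    (rigid_image_edge tau hQ hreg) wi_max (fun j k _ => rigid_union_mixed_le_diam v Q tau j k)).
Qed.
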